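(* Let $N\in\mathbb N$, $w_1,\dots,w_N\in\mathbb R^m$, $\omega(z)=\max_{i=1,\dots,N}\langle w_i,z\rangle$ for $z\in\mathbb R^m$, and $A\in\mathbb R^{m\times n}$. For $\lambda>0$ and $y\in\mathbb R^n$ let $h_\lambda(u)=\frac1{2\lambda}\|\lambda u-y\|^2-\frac1{2\lambda}\|y\|^2$ ($u\in\mathbb R^n$) and $\Psi_\lambda(v)=h_\lambda(A^\top v)+\omega^\star(v)$ ($v\in\mathbb R^m$). Then: (i) $\omega$ is globally $K_\omega$-Lipschitz continuous with $K_\omega=\max_{i}\|w_i\|$, and $\operatorname{dom}\omega^\star$ is bounded; (ii) there is a constant $\theta>0$ (a Hoffman constant depending only on $A^\top$ and the polytope $\operatorname{conv}\{w_1,\dots,w_N\}$, not on $\lambda$ or $y$) such that for every $\lambda>0$ and $y\in\mathbb R^n$: $v\mapsto h_\lambda(A^\top v)$ is convex and $\lambda\|A^\top A\|$-Lipschitz smooth, $\Psi_\lambda$ has a nonempty set $S$ of minimizers, and $\Psi_\lambda$ satisfies quadratic growth with constant $\kappa_\lambda=\lambda/\theta^2$; (iii) if $\lambda\ge\lambda_{\min}>0$, then $\kappa_\lambda\ge\lambda_{\min}/\theta^2$.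
   Context: $\omega^\star$ is the Fenchel conjugate of $\omega$. A proper closed convex $\Psi$ with nonempty minimizer set $S$ satisfies quadratic growth with constant $\kappa>0$ if $\Psi(v)\ge\min\Psi+\frac\kappa2\operatorname{dist}(v|S)^2$ for all $v$. A convex differentiable function $\phi$ is $\ell$-Lipschitz smooth if $\phi(u)-\phi(w)-\langle\nabla\phi(w),u-w\rangle\le\frac\ell2\|u-w\|^2$ for all $u,w$. *)

From HB Require Import structures.
From mathcomp Require Import all_boot all_order all_algebra.
From mathcomp Require Import all_classical all_reals all_analysis.
Set Implicit Arguments. Unset Strict Implicit. Unset Printing Implicit Defensive.
Import Order.TTheory GRing.Theory Num.Theory.
Import numFieldNormedType.Exports.
Local Open Scope classical_set_scope.
Local Open Scope ring_scope.

Section Defs.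
Variable R : realType.

Definition dotv (k : nat) (u v : 'rV[R]_k) : R := \sum_(i < k) u 0 i * v 0 i.
Definition enorm (k : nat) (u : 'rV[R]_k) : R := Num.sqrt (dotv u u).

(* omega(z) = max_{i=1..N} <w_i, z>  (meaningful for N >= 1; the seed of
   the iterated max is the first term of the family). *)
Definition omega (N m : nat) (w : 'I_N -> 'rV[R]_m) (z : 'rV[R]_m) : R :=
  \big[Num.max/head 0 [seq dotv (w i) z | i <- enum 'I_N]]_(i < N) dotv (w i) z.

Definition fconj (m : nat) (f : 'rV[R]_m -> R) (v : 'rV[R]_m) : \bar R :=
  ereal_sup [set ((dotv v z - f z)%:E) | z in [set: 'rV[R]_m]].

Definition edom (m : nat) (g : 'rV[R]_m -> \bar R) : set 'rV[R]_m :=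
  [set v | (g v < +oo)%E].

Definition ebounded_set (m : nat) (S : set 'rV[R]_m) : Prop :=
  exists M : R, forall v, S v -> enorm v <= M.

Definition opnorm (p q : nat) (M : 'M[R]_(p, q)) : R :=
  sup [set enorm (x *m M) | x in [set x : 'rV[R]_p | enorm x <= 1]].

Definition convex_fun (k : nat) (f : 'rV[R]_k -> R) : Prop :=
  forall (u v : 'rV[R]_k) (t : R), 0 <= t -> t <= 1 ->
    f (t *: u + (1 - t) *: v) <= t * f u + (1 - t) * f v.

(* phi differentiable and l-Lipschitz smooth; <grad phi(w), h> is 'd phi w h *)
Definition lip_smooth (k : nat) (phi : 'rV[R]_k -> R) (l : R) : Prop :=
  (forall w, differentiable phi w) /\
  forall u w : 'rV[R]_k,
    phi u - phi w - ('d phi w) (u - w) <= l / 2 * enorm (u - w) ^+ 2.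

Definition argmin (k : nat) (Psi : 'rV[R]_k -> \bar R) : set 'rV[R]_k :=
  [set s | forall v, (Psi s <= Psi v)%E].

Definition distset (k : nat) (v : 'rV[R]_k) (S : set 'rV[R]_k) : R :=
  inf [set enorm (v - s) | s in S].

Definition quad_growth (k : nat) (Psi : 'rV[R]_k -> \bar R) (kappa : R) : Prop :=
  (argmin Psi !=set0) /\
  forall v s, argmin Psi s ->
    (Psi s + (kappa / 2 * distset v (argmin Psi) ^+ 2)%:E <= Psi v)%E.

Definition hlam (n : nat) (lam : R) (y u : 'rV[R]_n) : R :=
  (2 * lam)^-1 * enorm (lam *: u - y) ^+ 2 - (2 * lam)^-1 * enorm y ^+ 2.

(* A^T v, written with row vectors as v *m A *)
Definition Atv (m n : nat) (A : 'M[R]_(m, n)) (v : 'rV[R]_m) : 'rV[R]_n := v *m A.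

Definition Psilam (N m n : nat) (w : 'I_N -> 'rV[R]_m) (A : 'M[R]_(m, n))
  (lam : R) (y : 'rV[R]_n) (v : 'rV[R]_m) : \bar R :=
  ((hlam lam y (Atv A v))%:E + fconj (omega w) v)%E.

End Defs.

(* (i) [omega] is a maximum of linear forms, hence Lipschitz by
   Cauchy-Schwarz, and [omega^*] is the indicator of the polytope
   C = conv {w_i}: it vanishes on C, and a point outside C is separated from
   C by its projection, along which [<v, z> - omega z] is unbounded.
   (ii) On C, Psi_lam is the convex quadratic h_lam (A^T .), so minimizers
   exist by compactness, and first-order optimality at a minimizer s gives
   Psi v >= Psi s + lam/2 |A^T (v - s)|^2.  A Hoffman bound for the polytope
   {mu in simplex | mu W A = l0 W A}, obtained from a conformal decomposition
   into elementary vectors, yields a minimizer s' with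
   |v - s'| <= theta |A^T (v - s)|, with theta depending on W and A only. *)

From HB Require Import structures.
From mathcomp Require Import all_boot all_order all_algebra.
From mathcomp Require Import all_classical all_reals all_analysis.
From mathcomp Require Import ring lra.
Import Order.TTheory GRing.Theory Num.Theory.
Import numFieldNormedType.Exports.
Local Open Scope classical_set_scope.
Local Open Scope ring_scope.
Set Implicit Arguments. Unset Strict Implicit. Unset Printing Implicit Defensive.

Section Euclid.
Variables (R : realType) (k : nat).
Implicit Types u v x : 'rV[R]_k.

Lemma dotvC u v : dotv u v = dotv v u.
Proof. by apply: eq_bigr => i _; rewrite mulrC. Qed.

Lemma dotvDl u v x : dotv (u + v) x = dotv u x + dotv v x.
Proof. by rewrite /dotv -big_split; apply: eq_bigr => i _; rewrite !mxE mulrDl. Qed.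

Lemma dotvDr u v x : dotv x (u + v) = dotv x u + dotv x v.
Proof. by rewrite dotvC dotvDl !(dotvC x). Qed.

Lemma dotvZl a u v : dotv (a *: u) v = a * dotv u v.
Proof. by rewrite /dotv mulr_sumr; apply: eq_bigr => i _; rewrite !mxE mulrA. Qed.

Lemma dotvZr a u v : dotv u (a *: v) = a * dotv u v.
Proof. by rewrite dotvC dotvZl dotvC. Qed.

Lemma dotvNl u v : dotv (- u) v = - dotv u v.
Proof. by rewrite -scaleN1r dotvZl mulN1r. Qed.

Lemma dotvNr u v : dotv u (- v) = - dotv u v.
Proof. by rewrite dotvC dotvNl dotvC. Qed.

Lemma dotvBl u v x : dotv (u - v) x = dotv u x - dotv v x.
Proof. by rewrite dotvDl dotvNl. Qed.

Lemma dotvBr u v x : dotv x (u - v) = dotv x u - dotv x v.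
Proof. by rewrite dotvDr dotvNr. Qed.

Lemma dotv0l u : dotv 0 u = 0.
Proof. by rewrite /dotv big1 // => i _; rewrite mxE mul0r. Qed.

Lemma dotv0r u : dotv u 0 = 0.
Proof. by rewrite dotvC dotv0l. Qed.

Lemma dotvv_ge0 u : 0 <= dotv u u.
Proof. by apply: sumr_ge0 => i _; rewrite -expr2 sqr_ge0. Qed.

Lemma dotvv_eq0 u : dotv u u = 0 -> u = 0.
Proof.
move=> /eqP; rewrite psumr_eq0 => [/allP u0|i _]; last by rewrite -expr2 sqr_ge0.
apply/rowP => i; rewrite mxE; apply/eqP.
by have := u0 i (mem_index_enum i); rewrite -expr2 sqrf_eq0.
Qed.

Lemma dotv_sqrDZ u v a :
  dotv (u + a *: v) (u + a *: v) = dotv u u + 2 * a * dotv u v + a ^+ 2 * dotv v v.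
Proof. by rewrite !(dotvDl, dotvDr, dotvZl, dotvZr) (dotvC v u); ring. Qed.

Lemma dotv_sqr_le u v : dotv u v ^+ 2 <= dotv u u * dotv v v.
Proof.
have [v0|vn0] := eqVneq (dotv v v) 0.
  by rewrite (dotvv_eq0 v0) dotv0r dotv0l expr0n mulr0.
have vpos : 0 < dotv v v by rewrite lt_def vn0 dotvv_ge0.
(* expand [|c u - b v|^2 >= 0] for [b = <u, v>], [c = |v|^2] *)
have := dotvv_ge0 (dotv v v *: u - dotv u v *: v).
by rewrite !(dotvBl, dotvBr, dotvZl, dotvZr) (dotvC v u) => h; nra.
Qed.

Lemma enorm_sqr u : enorm u ^+ 2 = dotv u u.
Proof. by rewrite /enorm sqr_sqrtr // dotvv_ge0. Qed.

Lemma enorm_ge0 u : 0 <= enorm u.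
Proof. exact: sqrtr_ge0. Qed.

Lemma enorm0 : enorm (0 : 'rV[R]_k) = 0.
Proof. by rewrite /enorm dotv0l sqrtr0. Qed.

Lemma dotv_le u v : dotv u v <= enorm u * enorm v.
Proof.
rewrite /enorm -sqrtrM ?dotvv_ge0 // (le_trans (ler_norm _)) //.
by rewrite -sqrtr_sqr ler_sqrt ?mulr_ge0 ?dotvv_ge0 ?dotv_sqr_le.
Qed.

Lemma enormD u v : enorm (u + v) <= enorm u + enorm v.
Proof.
rewrite -(@ler_pXn2r _ 2) ?nnegrE ?addr_ge0 ?enorm_ge0 //.
rewrite enorm_sqr -[v]scale1r dotv_sqrDZ scale1r -!enorm_sqr sqrrD.
by have := dotv_le u v; lra.
Qed.

Lemma enormZ a u : enorm (a *: u) = `|a| * enorm u.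
Proof.
by rewrite /enorm dotvZl dotvZr mulrA sqrtrM ?sqr_ge0 // -expr2 sqrtr_sqr.
Qed.

Lemma enormN u : enorm (- u) = enorm u.
Proof. by rewrite -scaleN1r enormZ normrN normr1 mul1r. Qed.

End Euclid.

Section LinearBound.
Variable R : realType.

Lemma dotv_mulmx a b (d : 'rV[R]_a) (A : 'M[R]_(a, b)) (u : 'rV[R]_b) :
  dotv (d *m A) u = dotv d (u *m A^T).
Proof.
rewrite /dotv; under eq_bigr do rewrite mxE mulr_suml.
rewrite exchange_big /=; apply: eq_bigr => i _.
by rewrite mxE mulr_sumr; apply: eq_bigr => j _; rewrite !mxE; ring.
Qed.

Lemma enorm_mulmx_bound a b (B : 'M[R]_(a, b)) :
  exists c, 0 <= c /\ forall y, enorm (y *m B) <= c * enorm y.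
Proof.
pose S := \sum_(j < b) dotv (col j B)^T (col j B)^T.
have S0 : 0 <= S by apply: sumr_ge0 => j _; apply: dotvv_ge0.
exists (Num.sqrt S); split=> [|y]; first exact: sqrtr_ge0.
rewrite /enorm -sqrtrM ?dotvv_ge0 // ler_sqrt ?mulr_ge0 ?dotvv_ge0 //.
rewrite /S mulr_suml; apply: ler_sum => j _.
have -> : (y *m B) 0 j = dotv y (col j B)^T.
  by rewrite mxE; apply: eq_bigr => i _; rewrite !mxE.
by rewrite -expr2 mulrC dotv_sqr_le.
Qed.

End LinearBound.

Definition between0 (R : realType) (x z : R) := 0 <= x * (z - x).

Lemma between0P (R : realType) (x z : R) :
  between0 x z <-> (0 <= x /\ x <= z) \/ (z <= x /\ x <= 0).
Proof.
rewrite /between0; split=> [h|]; last by case=> -[]; nra.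
by case: (lerP 0 z) => z0; [left | right]; split; nra.
Qed.

Lemma between0_trans (R : realType) (x y z : R) :
  between0 x y -> between0 y z -> between0 x z.
Proof. by move=> /between0P hx /between0P hy; apply/between0P; lra. Qed.

Lemma between0D (R : realType) (x y z : R) :
  between0 x z -> between0 y (z - x) -> between0 (x + y) z.
Proof. by move=> /between0P hx /between0P hy; apply/between0P; lra. Qed.

Lemma between0_compl (R : realType) (x z : R) : between0 x z -> between0 (z - x) z.
Proof. by rewrite /between0 mulrC (_ : z - (z - x) = x) //; ring. Qed.

Section ConformalStep.
Local Close Scope classical_set_scope.
Variables (R : realType) (I : finType).
Implicit Types a z : I -> R.

Definition conformal a z := forall i, 0 <= a i * z i /\ (z i = 0 -> a i = 0).
Definition nsupp z := #|[set i | z i != 0]|.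
Definition subZ z (s : R) a := fun i => z i - s * a i.

Lemma nsupp_gt0 z i : z i != 0 -> (0 < nsupp z)%N.
Proof. by move=> zi; rewrite card_gt0; apply/set0Pn; exists i; rewrite inE. Qed.

Lemma conformal_refl z : conformal z z.
Proof. by move=> i; rewrite -expr2 sqr_ge0. Qed.

Lemma conformal_trans a b z : conformal a b -> conformal b z -> conformal a z.
Proof.
move=> ab bz i; have [ab1 ab2] := ab i; have [bz1 bz2] := bz i.
split=> [|/bz2/ab2] //.
have [/ab2 ->|nb] := eqVneq (b i) 0; first by rewrite mul0r.
have : 0 < b i * b i by rewrite -expr2 exprn_even_gt0.
by have := mulr_ge0 ab1 bz1; nra.
Qed.

(* [s] is the largest step keeping [z - s a] conformal to [z]: at the
   minimizing index the coordinate vanishes. *)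
Lemma conformal_step z a :
  (forall i, z i = 0 -> a i = 0) -> (exists i, 0 < a i * z i) ->
  exists s, [/\ 0 < s, conformal (subZ z s a) z,
    (nsupp (subZ z s a) < nsupp z)%N &
    conformal a z -> forall i, between0 (s * a i) (z i)].
Proof.
move=> za [i0 Pi0].
have [j Pj jmin] := arg_minP (fun i => z i / a i) (Pi0 : [pred i | 0 < a i * z i] i0).
rewrite inE in Pj; set s := z j / a j.
have a_neq0 i : 0 < a i * z i -> a i != 0.
  by apply: contraTneq => ->; rewrite mul0r ltxx.
have s_gt0 : 0 < s.
  have ajj : 0 < a j * a j by rewrite -expr2 exprn_even_gt0 ?a_neq0.
  have e : s * (a j * a j) = a j * z j by rewrite /s; field; exact: a_neq0.
  nra.
have ratio_ge i : 0 < a i * z i -> exists q, z i = q * a i /\ s <= q.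
  move=> Pi; exists (z i / a i); split; first by rewrite divfK ?a_neq0.
  by apply: jmin; rewrite inE.
exists s; split => //.
- move=> i; rewrite /subZ; split=> [|zi]; last by rewrite zi (za i zi) mulr0 subr0.
  case: (ltP 0 (a i * z i)) => [Pi|Pi]; last by have := sqr_ge0 (z i); nra.
  have [q [e sq]] := ratio_ge i Pi; rewrite e in Pi *.
  by have := sqr_ge0 (a i); nra.
- apply: proper_card; apply/properP; split.
    apply/fintype.subsetP => i; rewrite !inE; apply: contra => /eqP zi.
    by rewrite /subZ zi (za i zi) mulr0 subr0.
  exists j; rewrite !inE /subZ /s ?divfK ?a_neq0 ?subrr ?eqxx //.
  by apply: contraTneq Pj => ->; rewrite mulr0 ltxx.
- move=> ca i; rewrite /between0.
  case: (ltP 0 (a i * z i)) => [Pi|Pi].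
    have [q [-> sq]] := ratio_ge i Pi.
    by have := sqr_ge0 (a i); nra.
  have /eqP : a i * z i = 0 by have := (ca i).1; lra.
  rewrite mulf_eq0 => /orP [/eqP ->|/eqP zi]; first by rewrite !mulr0 mul0r.
  by rewrite zi (za i zi) !mulr0 mul0r.
Qed.

End ConformalStep.

Section ConformalHoffman.
Local Close Scope classical_set_scope.
Variables (R : realType) (p k : nat) (M : 'M[R]_(p, k)).

Definition supported_on (J : {set 'I_p}) (x : 'rV[R]_p) :=
  forall i, i \notin J -> x 0 i = 0.

Definition free_rows (J : {set 'I_p}) :=
  forall al : 'rV[R]_p, supported_on J al -> al *m M = 0 -> al = 0.

Lemma free_rows_enorm_bound J : exists c, 0 <= c /\
  (free_rows J -> forall x, supported_on J x -> enorm x <= c * enorm (x *m M)).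
Proof.
case: (boolp.pselect (free_rows J)) => [freeJ|]; last by exists 0.
pose D : 'M[R]_p := diag_mx (\row_i (i \in J)%:R).
have xD x : supported_on J x -> x *m D = x.
  move=> Jx; apply/rowP => i; rewrite mul_mx_diag !mxE.
  by case: (boolP (i \in J)) => [_|/Jx ->]; rewrite ?mulr1 ?mulr0.
(* [x |-> (x D M, x (1 - D))] is injective, so it has a linear left inverse *)
pose Y := row_mx (D *m M) (1%:M - D).
have freeY : row_free Y.
  apply: inj_row_free => v; rewrite mul_mx_row -row_mx0 => /eq_row_mx [vDM].
  rewrite mulmxBr mulmx1 => /eqP; rewrite subr_eq0 => /eqP vD.
  rewrite vD; apply: freeJ; last by rewrite -mulmxA.
  by move=> i iJ; rewrite mul_mx_diag !mxE (negbTE iJ) mulr0.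
have [B YB] := row_freeP freeY.
have [c [c0 Bc]] := enorm_mulmx_bound (usubmx B).
exists c; split => // _ x Jx.
suff xE : x = (x *m M) *m usubmx B by rewrite {1}xE; apply: Bc.
have : x *m Y *m B = x by rewrite -mulmxA YB mulmx1.
rewrite mul_mx_row mulmxA xD // mulmxBr mulmx1 xD // subrr.
by rewrite -[B in _ *m B]vsubmxK mul_row_col mul0mx addr0.
Qed.

Lemma free_rows_uniform_bound : exists K, 0 <= K /\
  forall J, free_rows J -> forall x, supported_on J x -> enorm x <= K * enorm (x *m M).
Proof.
have [c c_bound] := boolp.choice free_rows_enorm_bound.
exists (\sum_J c J); split=> [|J freeJ x Jx].
  by apply: sumr_ge0 => J _; case: (c_bound J).
apply: le_trans ((c_bound J).2 freeJ x Jx) _.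
rewrite ler_wpM2r ?enorm_ge0 // (bigD1 J) //= lerDl.
by apply: sumr_ge0 => J' _; case: (c_bound J').
Qed.

(* A vector [Z] indexed by [option 'I_p] encodes the pair [(x, t)] with
   [x i = Z (Some i)] and [t = Z None]. *)
Section Homogenized.
Variable r : 'rV[R]_k.

Definition xpart (Z : option 'I_p -> R) : 'rV[R]_p := \row_i Z (Some i).
Definition homsol Z := xpart Z *m M = Z None *: r.
Definition xsupp (Z : option 'I_p -> R) := [set i | Z (Some i) != 0].

Lemma homsol_subZ Z s a : homsol Z -> homsol a -> homsol (subZ Z s a).
Proof.
rewrite /homsol => hZ ha.
have -> : xpart (subZ Z s a) = xpart Z - s *: xpart a by apply/rowP => i; rewrite !mxE.
by rewrite mulmxBl -scalemxAl hZ ha /subZ scalerA scalerBl.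
Qed.

Lemma exists_elementary_conformal Z : homsol Z -> (exists i, Z i != 0) ->
  exists E, [/\ homsol E, (exists i, E i != 0), conformal E Z &
                E None = 0 \/ free_rows (xsupp E)].
Proof.
move: {2}(nsupp Z) (leqnn (nsupp Z)) => n.
elim: n Z => [|n IH] Z hn hZ [i0 Zi0].
  by have := nsupp_gt0 Zi0; rewrite leqn0 in hn; rewrite (eqP hn).
have [ZN0|ZN_neq0] := eqVneq (Z None) 0.
  by exists Z; split => //; [exists i0 | exact: conformal_refl | left].
case: (boolp.pselect (free_rows (xsupp Z))) => freeZ.
  by exists Z; split => //; [exists i0 | exact: conformal_refl | right].
have [al [al_supp alM /eqP al0]] : exists al : 'rV[R]_p,
    [/\ supported_on (xsupp Z) al, al *m M = 0 & al != 0].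
  apply: boolp.contra_notP freeZ => H al h1 h2; apply: boolp.contra_notP H => nal.
  by exists al; split => //; apply/eqP.
have [j alj] : exists j, al 0 j != 0.
  apply: boolp.contra_notP al0 => H; apply/rowP => j; rewrite mxE.
  by have [//|alj] := eqVneq (al 0 j) 0; case: H; exists j.
have Zj : Z (Some j) != 0.
  by apply: contraNneq alj => Zj0; apply/eqP/al_supp; rewrite inE Zj0 eqxx.
(* move against the kernel vector [al], oriented so that it points along [Z] at [j] *)
pose c : R := if 0 < al 0 j * Z (Some j) then 1 else -1.
pose a o := if o is Some i then c * al 0 i else 0.
have a_supp o : Z o = 0 -> a o = 0.
  by case: o => [i Zi|//]; rewrite /a al_supp ?mulr0 // inE Zi eqxx.
have a_pos : exists o, 0 < a o * Z o.
  exists (Some j); rewrite /a /c; case: ifP => [|/negbT]; first by rewrite mul1r.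
  have : al 0 j * Z (Some j) != 0 by rewrite mulf_neq0.
  by rewrite mulN1r mulNr oppr_gt0 -leNgt lt_neqAle => -> ->.
have [s [_ conf_s lt_s _]] := conformal_step a_supp a_pos.
have hZ' : homsol (subZ Z s a).
  apply: homsol_subZ => //; rewrite /homsol scale0r.
  have -> : xpart a = c *: al by apply/rowP => i; rewrite !mxE.
  by rewrite -scalemxAl alM scaler0.
have Z'N : subZ Z s a None != 0 by rewrite /subZ /= mulr0 subr0 ZN_neq0.
have [E [hE E0 confE EN]] := IH _ (leq_trans lt_s hn) hZ' (ex_intro _ None Z'N).
by exists E; split => //; apply: conformal_trans confE conf_s.
Qed.

Lemma conformal_bounded_solution K : 0 <= K ->
  (forall J, free_rows J -> forall x, supported_on J x -> enorm x <= K * enorm (x *m M)) ->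
  forall Z, homsol Z -> 0 <= Z None ->
  exists d : 'rV[R]_p, [/\ forall i, between0 (d 0 i) (Z (Some i)),
    d *m M = Z None *: r & enorm d <= K * Z None * enorm r].
Proof.
move=> K0 Kbound Z; move: {2}(nsupp Z) (leqnn (nsupp Z)) => n.
elim: n Z => [|n IH] Z hn hZ ZN0; have [ZN|ZNneq] := eqVneq (Z None) 0.
1,3: exists 0; rewrite mul0mx enorm0 ZN scale0r mulr0 mul0r.
  1,2: by split=> // i; rewrite mxE /between0 mul0r.
  by have := nsupp_gt0 ZNneq; rewrite leqn0 in hn; rewrite (eqP hn).
have ZN_gt0 : 0 < Z None by rewrite lt_def ZNneq.
have [E [hE [i1 Ei1] confE EN]] :=
  exists_elementary_conformal hZ (ex_intro _ None ZNneq).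
have E_supp o : Z o = 0 -> E o = 0 by move=> /((confE o).2).
have E_pos : exists o, 0 < E o * Z o.
  exists i1; have [c1 c2] := confE i1; rewrite lt_def c1 andbT mulf_neq0 //.
  by apply: contraNneq Ei1 => /c2 ->.
have [s [s0 _ lt_s sE_betw]] := conformal_step E_supp E_pos.
have {}sE_betw := sE_betw confE.
have Z'N0 : 0 <= subZ Z s E None.
  by have /between0P := sE_betw None; rewrite /subZ; lra.
have [d' [d'_betw d'M d'_norm]] :=
  IH _ (leq_trans lt_s hn) (homsol_subZ s hZ hE) Z'N0.
case: EN => [EN0|freeE].
  have Z'N : subZ Z s E None = Z None by rewrite /subZ EN0 mulr0 subr0.
  rewrite Z'N in d'M d'_norm; exists d'; split => // i.
  exact: between0_trans (d'_betw i) (between0_compl (sE_betw (Some i))).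
have EN_ge0 : 0 <= E None.
  by have := (confE None).1; rewrite pmulr_lge0.
exists (s *: xpart E + d'); split.
- move=> i; rewrite !mxE; apply: between0D; first exact: sE_betw.
  exact: d'_betw.
- by rewrite mulmxDl -scalemxAl hE d'M scalerA -scalerDl /subZ; congr (_ *: _); ring.
- apply: le_trans (enormD _ _) _.
  have sE_norm : enorm (s *: xpart E) <= K * (s * E None) * enorm r.
    apply: le_trans (Kbound _ freeE _ _) _.
      by move=> i; rewrite inE negbK !mxE => /eqP ->; rewrite mulr0.
    rewrite -scalemxAl hE scalerA enormZ ger0_norm ?mulr_ge0 ?(ltW s0) //.
    by rewrite !mulrA.
  by rewrite /subZ in d'_norm; nra.
Qed.

End Homogenized.

Lemma conformal_hoffman : exists K, 0 <= K /\ forall d : 'rV[R]_p, exists e : 'rV[R]_p,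
  [/\ forall i, between0 (e 0 i) (d 0 i), e *m M = d *m M & enorm e <= K * enorm (d *m M)].
Proof.
have [K [K0 Kbound]] := free_rows_uniform_bound.
exists K; split => // d.
pose Z o := if o is Some i then d 0 i else 1.
have hZ : homsol (d *m M) Z.
  by rewrite /homsol scale1r; congr (_ *m _); apply/rowP => i; rewrite mxE.
have [e [e_betw eM e_norm]] := conformal_bounded_solution K0 Kbound hZ ler01.
by exists e; rewrite scale1r mulr1 in eM e_norm.
Qed.

End ConformalHoffman.

Lemma differentiable_sqr_affine (R : realType) a b (B : 'M[R]_(a, b)) (c : 'rV[R]_b) x :
  differentiable (fun u : 'rV[R]_a => dotv (u *m B + c) (u *m B + c)) x.
Proof.
have coord_diff j : differentiable (fun u : 'rV[R]_a => (u *m B + c) 0 j) x.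
  have -> : (fun u : 'rV[R]_a => (u *m B + c) 0 j) =
      \sum_(i < a) (fun u : 'rV[R]_a => u 0 i * B i j) + cst (c 0 j).
    by apply/funext => u; rewrite !mxE fct_sumE.
  apply: differentiableD (differentiable_cst _ _); apply: differentiable_sum => i.
  exact: differentiableM (differentiable_coord _ _ _) (differentiable_cst _ _).
have -> : (fun u : 'rV[R]_a => dotv (u *m B + c) (u *m B + c)) =
    \sum_(j < b) (fun u : 'rV[R]_a => (u *m B + c) 0 j * (u *m B + c) 0 j).
  by apply/funext => u; rewrite fct_sumE.
by apply: differentiable_sum => j; apply: differentiableM.
Qed.

Section Simplex.
Variables (R : realType) (N : nat).

Definition simplex (l : 'rV[R]_N) := (forall i, 0 <= l 0 i) /\ \sum_(i < N) l 0 i = 1.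

Lemma simplex_compact : compact [set l | simplex l].
Proof.
apply: bounded_closed_compact.
  exists 1; split => // M M1 l [l_ge0 l_sum]; change (mx_norm l <= M).
  rewrite mx_normrE.
  apply: bigmax_le => [|[i j] _ /=]; first lra.
  rewrite (ord1 i) ger0_norm // (le_trans _ (ltW M1)) // -l_sum (bigD1 j) //= lerDl.
  exact: sumr_ge0.
have -> : [set l | simplex l] =
    \bigcap_(i in [set: 'I_N]) ((fun l : 'rV[R]_N => l 0 i) @^-1` [set x | 0 <= x])
    `&` (fun l : 'rV[R]_N => \sum_(i < N) l 0 i) @^-1` [set x | x = 1].
  by apply/seteqP; split => l /= [l_ge0 l_sum]; split => // i *; apply: l_ge0.
apply: closedI.
  apply: closed_bigI => i _; apply: preimage_closed; last exact: closed_ge.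
  by move=> l _; apply: coord_continuous.
apply: preimage_closed; last exact: closed_eq.
move=> l _; apply: differentiable_continuous.
have -> : (fun l : 'rV[R]_N => \sum_(i < N) l 0 i) = \sum_(i < N) (fun l : 'rV[R]_N => l 0 i).
  by apply/funext => l'; rewrite fct_sumE.
by apply: differentiable_sum => i; apply: differentiable_coord.
Qed.

Lemma simplex_exists_min (f : 'rV[R]_N -> R) : (0 < N)%N -> continuous f ->
  exists l, simplex l /\ forall l', simplex l' -> f l <= f l'.
Proof.
move=> N_gt0 f_cont.
have simplex_neq0 : [set l | simplex l] !=set0.
  exists (delta_mx 0 (Ordinal N_gt0)); split=> [i|]; first by rewrite mxE ler0n.
  rewrite (bigD1 (Ordinal N_gt0)) //= mxE !eqxx big1 ?addr0 // => i /negbTE.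
  by rewrite mxE andbC => ->.
have [l /set_mem l_simplex l_min] :=
  EVT_min_rV simplex_neq0 simplex_compact (continuous_subspaceT f_cont).
by exists l; split=> // l' /mem_set; apply: l_min.
Qed.

End Simplex.

Lemma le0_of_le_scaled (R : realType) (a b : R) : 0 <= b ->
  (forall t, 0 < t -> t <= 1 -> a <= t * b) -> a <= 0.
Proof.
move=> b0 le_ab; rewrite leNgt; apply/negP => a_gt0.
pose t := a / (a + b).
have e : t * (a + b) = a by rewrite /t divfK // gt_eqF //; lra.
have t_gt0 : 0 < t by rewrite /t divr_gt0 //; lra.
have t_le1 : t <= 1 by rewrite /t ler_pdivrMr ?mul1r; lra.
by have := le_ab t t_gt0 t_le1; nra.
Qed.

Section Omega.
Variables (R : realType) (N m : nat) (w : 'I_N -> 'rV[R]_m).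
Hypothesis N_gt0 : (0 < N)%N.

Lemma le_omega z i : dotv (w i) z <= omega w z.
Proof. exact: le_bigmax. Qed.

Lemma omega_attained z : exists i, omega w z = dotv (w i) z.
Proof.
rewrite /omega; set s0 := head _ _.
have [i ->] : exists i, s0 = dotv (w i) z.
  rewrite /s0; case E: (enum 'I_N) => [|i s] /=; last by exists i.
  by exfalso; have := size_enum_ord N; rewrite E => /= N0; move: N_gt0; rewrite -N0.
elim/big_rec: _ => [|j x _ [i' ->]]; first by exists i.
by rewrite maxEle; case: ifP => _; [exists i' | exists j].
Qed.

Lemma omega0 : omega w 0 = 0.
Proof. by have [i ->] := omega_attained 0; rewrite dotv0r. Qed.

Definition Komega := \big[Num.max/0]_(i < N) enorm (w i).

Lemma enorm_le_Komega i : enorm (w i) <= Komega.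
Proof. exact: le_bigmax. Qed.

Lemma omega_subr_le z z' : omega w z - omega w z' <= Komega * enorm (z - z').
Proof.
have [i ->] := omega_attained z.
apply: le_trans (_ : dotv (w i) z - dotv (w i) z' <= _).
  by rewrite lerD2l lerN2 le_omega.
rewrite -dotvBr (le_trans (dotv_le _ _)) // ler_wpM2r ?enorm_ge0 //.
exact: enorm_le_Komega.
Qed.

Lemma omega_lipschitz z z' : `|omega w z - omega w z'| <= Komega * enorm (z - z').
Proof.
by rewrite ler_norml omega_subr_le andbT lerNl opprB -enormN opprB omega_subr_le.
Qed.

Lemma omega_le_Komega z : omega w z <= Komega * enorm z.
Proof. by have := omega_subr_le z 0; rewrite omega0 !subr0. Qed.

Definition Wmx : 'M[R]_(N, m) := \matrix_i w i.

Lemma dotv_Wmx (l : 'rV[R]_N) z : dotv (l *m Wmx) z = \sum_(i < N) l 0 i * dotv (w i) z.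
Proof.
rewrite dotv_mulmx; apply: eq_bigr => i _; congr (_ * _).
by rewrite mxE; apply: eq_bigr => j _; rewrite !mxE mulrC.
Qed.

Definition in_hull v := exists l, simplex l /\ v = l *m Wmx.

Lemma in_hull_w i : in_hull (w i).
Proof.
exists (delta_mx 0 i); split; last by rewrite -rowE rowK.
split=> [j|]; first by rewrite mxE ler0n.
rewrite (bigD1 i) //= mxE !eqxx big1 ?addr0 // => j /negbTE.
by rewrite mxE andbC => ->.
Qed.

Lemma in_hull_conv u v t : in_hull u -> in_hull v -> 0 <= t -> t <= 1 ->
  in_hull (t *: u + (1 - t) *: v).
Proof.
move=> [l1 [[l1_ge0 l1_sum] ->]] [l2 [[l2_ge0 l2_sum] ->]] t0 t1.
exists (t *: l1 + (1 - t) *: l2); split; last by rewrite mulmxDl -!scalemxAl.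
split=> [j|]; first by rewrite !mxE addr_ge0 // mulr_ge0 // subr_ge0.
under eq_bigr do rewrite !mxE.
by rewrite big_split /= -!mulr_sumr l1_sum l2_sum; ring.
Qed.

Lemma hull_exists_min_sqr_affine n (c : 'rV[R]_n) (B : 'M[R]_(m, n)) :
  exists p, in_hull p /\ forall u, in_hull u ->
    dotv (p *m B + c) (p *m B + c) <= dotv (u *m B + c) (u *m B + c).
Proof.
have [l [l_simplex l_min]] := simplex_exists_min N_gt0
  (fun x => differentiable_continuous (differentiable_sqr_affine (Wmx *m B) c x)).
exists (l *m Wmx); split=> [|_ [l' [l'_simplex ->]]]; first by exists l.
by rewrite -!mulmxA; apply: l_min.
Qed.

End Omega.

Section Conjugate.
Variables (R : realType) (N m : nat) (w : 'I_N -> 'rV[R]_m).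
Hypothesis N_gt0 : (0 < N)%N.
Local Notation omega_star := (fconj (omega w)).

Lemma hull_projection v : exists p, in_hull w p /\
  forall u, in_hull w u -> dotv (v - p) (u - p) <= 0.
Proof.
have [p [p_hull p_min]] := hull_exists_min_sqr_affine w N_gt0 (- v) 1%:M.
exists p; split=> // u u_hull.
apply: (@le0_of_le_scaled _ _ (dotv (u - p) (u - p) / 2)) => [|t t0 t1].
  by rewrite divr_ge0 ?dotvv_ge0.
have := p_min _ (in_hull_conv u_hull p_hull (ltW t0) t1); rewrite !mulmx1.
have -> : t *: u + (1 - t) *: p - v = (p - v) + t *: (u - p).
  by apply/rowP => i; rewrite !mxE; ring.
rewrite dotv_sqrDZ.
have -> : dotv (p - v) (u - p) = - dotv (v - p) (u - p) by rewrite -dotvNl opprB.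
by have := dotvv_ge0 (u - p); nra.
Qed.

Lemma fconj_ge v z : ((dotv v z - omega w z)%:E <= omega_star v)%E.
Proof. by apply: ereal_sup_ubound; exists z. Qed.

Lemma fconj_ge0 v : (0 <= omega_star v)%E.
Proof. by have := fconj_ge v 0; rewrite dotv0r omega0 // subr0. Qed.

Lemma fconj_fin_bound v : (omega_star v < +oo)%E ->
  exists c : R, forall z, dotv v z - omega w z <= c.
Proof.
move=> v_dom; exists (fine (omega_star v)) => z.
by rewrite -lee_fin fineK ?fconj_ge // ge0_fin_numE ?fconj_ge0.
Qed.

Lemma fconj_hull v : in_hull w v -> omega_star v = 0%E.
Proof.
move=> [l [[l_ge0 l_sum] ->]]; apply/le_anti; rewrite fconj_ge0 andbT.
apply: ge_ereal_sup => _ [z _ <-]; rewrite lee_fin subr_le0 dotv_Wmx.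
rewrite -[leRHS]mul1r -l_sum mulr_suml; apply: ler_sum => i _.
by rewrite ler_wpM2l ?le_omega.
Qed.

Lemma fconj_dom_bounded v : (omega_star v < +oo)%E -> enorm v <= Komega w.
Proof.
move=> /fconj_fin_bound [c c_bound].
have c0 : 0 <= c by have := c_bound 0; rewrite dotv0r omega0 // subr0.
rewrite leNgt; apply/negP => Kv.
have K0 : 0 <= Komega w := le_trans (enorm_ge0 _) (enorm_le_Komega w (Ordinal N_gt0)).
(* along the ray [t v], [<v, t v> - omega (t v) >= t |v| (|v| - K)] is unbounded *)
set q := enorm v * (enorm v - Komega w).
have q_gt0 : 0 < q by rewrite mulr_gt0 //; lra.
pose t := (c + 1) / q.
have t0 : 0 <= t by rewrite divr_ge0 //; lra.
have tq : t * q = c + 1 by rewrite divfK ?gt_eqF.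
have := c_bound (t *: v); rewrite dotvZr -enorm_sqr.
have := omega_le_Komega w N_gt0 (t *: v); rewrite enormZ ger0_norm //.
by rewrite /q in tq; nra.
Qed.

Lemma fconj_dom_hull v : (omega_star v < +oo)%E -> in_hull w v.
Proof.
move=> /fconj_fin_bound [c c_bound].
have c0 : 0 <= c by have := c_bound 0; rewrite dotv0r omega0 // subr0.
have [p [p_hull p_proj]] := hull_projection v.
case: (boolp.pselect (in_hull w v)) => // v_hull; exfalso.
(* [z = v - p] separates [v] from every [w i]; then [omega_star] grows along [t z] *)
set z := v - p.
have zz_gt0 : 0 < dotv z z.
  rewrite lt_def dotvv_ge0 andbT; apply: contra_notN v_hull => /eqP /dotvv_eq0 /eqP.
  by rewrite subr_eq0 => /eqP ->.
have w_le i : dotv (w i) z <= dotv p z.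
  by have := p_proj _ (in_hull_w w i); rewrite dotvBr dotvC (dotvC z p); lra.
have vz : dotv v z - dotv p z = dotv z z by rewrite -dotvBl.
pose t := (c + 1) / dotv z z.
have t0 : 0 <= t by rewrite divr_ge0 //; lra.
have tz : t * dotv z z = c + 1 by rewrite divfK ?gt_eqF.
have := c_bound (t *: z); have [j ->] := omega_attained w N_gt0 (t *: z).
by rewrite !dotvZr; have := w_le j; nra.
Qed.

End Conjugate.

Section OperatorNorm.
Variables (R : realType) (p q : nat) (M : 'M[R]_(p, q)).

Lemma opnorm_ubound :
  has_ubound [set enorm (x *m M) | x in [set x : 'rV[R]_p | enorm x <= 1]].
Proof.
have [c [c0 c_bound]] := enorm_mulmx_bound M.
exists c => _ [x x1 <-]; apply: le_trans (c_bound x) _.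
by rewrite -[leRHS]mulr1 ler_wpM2l.
Qed.

Lemma opnorm_ge0 : 0 <= opnorm M.
Proof.
apply: le_trans (ub_le_sup opnorm_ubound _); first exact: (enorm_ge0 (0 *m M)).
by exists 0; rewrite //= enorm0 ler01.
Qed.

Lemma enorm_mulmx_le_opnorm x : enorm (x *m M) <= opnorm M * enorm x.
Proof.
have [->|x_neq0] := eqVneq x 0; first by rewrite mul0mx !enorm0 mulr0.
have x_gt0 : 0 < enorm x.
  rewrite lt_def enorm_ge0 andbT; apply: contra x_neq0 => /eqP x0.
  by apply/eqP/dotvv_eq0; rewrite -enorm_sqr x0 expr0n.
have ix : 0 <= (enorm x)^-1 by rewrite invr_ge0 enorm_ge0.
rewrite -ler_pdivrMr // mulrC -{1}(ger0_norm ix) -enormZ scalemxAl.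
apply: (ub_le_sup opnorm_ubound); exists ((enorm x)^-1 *: x) => //=.
by rewrite enormZ ger0_norm // (mulVf (lt0r_neq0 x_gt0)).
Qed.

End OperatorNorm.

(* [|A^T d|^2 = <d, A A^T d> <= |d| |A A^T d|], and [|A A^T d|] is controlled by [opnorm (A^T A)] *)
Lemma sqr_enorm_mulmx_le (R : realType) m n (A : 'M[R]_(m, n)) (d : 'rV[R]_m) :
  enorm (d *m A) ^+ 2 <= opnorm (A^T *m A) * enorm d ^+ 2.
Proof.
set u := d *m A; set O := opnorm (A^T *m A).
have O0 : 0 <= O := opnorm_ge0 _.
have [u0|u_neq0] := eqVneq (enorm u) 0.
  by rewrite u0 expr0n /= mulr_ge0 ?sqr_ge0.
have u_gt0 : 0 < enorm u ^+ 2 by rewrite exprn_gt0 // lt_def u_neq0 enorm_ge0.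
have uAT : enorm (u *m A^T) ^+ 2 <= O * enorm u ^+ 2.
  rewrite enorm_sqr -dotv_mulmx -mulmxA (le_trans (dotv_le _ _)) //.
  by rewrite expr2 mulrA ler_wpM2r ?enorm_ge0 ?enorm_mulmx_le_opnorm.
have uu : enorm u ^+ 2 <= enorm d * enorm (u *m A^T).
  by rewrite enorm_sqr {1}/u dotv_mulmx dotv_le.
rewrite -(ler_pM2r u_gt0); apply: le_trans (_ : enorm d ^+ 2 * (O * enorm u ^+ 2) <= _).
  apply: le_trans (_ : (enorm d * enorm (u *m A^T)) ^+ 2 <= _).
    by rewrite -expr2 lerXn2r ?nnegrE ?mulr_ge0 ?enorm_ge0 ?sqr_ge0.
  by rewrite exprMn ler_wpM2l ?sqr_ge0.
by rewrite mulrCA mulrA.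
Qed.

Lemma derive_quadratic_ray (R : realType) a (f : 'rV[R]_a -> R) (x h : 'rV[R]_a) (L c : R) :
  (forall t, f (t *: h + x) = f x + t * L + t ^+ 2 * c) -> derive f x h = L.
Proof.
move=> f_ray; apply: cvg_lim => //.
have slope : {near 0^', (fun t : R => L + t * c) =1
    (fun t => t^-1 *: ((f \o shift x) (t *: h) - f x))}.
  near=> t; have t0 : t != 0 by near: t; exact: nbhs_dnbhs_neq.
  by rewrite /= /shift f_ray /GRing.scale /=; field.
apply: cvg_trans (near_eq_cvg slope) _; apply: cvg_within_filter.
suff : (cst L + (fun t : R => t * c)) @ nbhs (0 : R) --> L + 0 * c.
  by rewrite mul0r addr0.
by apply: cvgD; [exact: cvg_cst | apply: cvgMr_tmp; exact: cvg_id].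
Unshelve. all: by end_near.
Qed.

Section QuadraticPart.
Variables (R : realType) (m n : nat) (A : 'M[R]_(m, n)) (lam : R) (y : 'rV[R]_n).
Hypothesis lam_gt0 : 0 < lam.

Definition hAt v := hlam lam y (Atv A v).

Lemma hAt_addZ v e c : hAt (v + c *: e) =
  hAt v + c * dotv (lam *: (v *m A) - y) (e *m A) + c ^+ 2 * (lam / 2 * enorm (e *m A) ^+ 2).
Proof.
rewrite /hAt /hlam /Atv !enorm_sqr mulmxDl -scalemxAl.
have -> : lam *: (v *m A + c *: (e *m A)) - y = (lam *: (v *m A) - y) + (lam * c) *: (e *m A).
  by apply/rowP => i; rewrite !mxE; ring.
by rewrite dotv_sqrDZ; field; rewrite gt_eqF.
Qed.

Lemma hAt_differentiable v : differentiable hAt v.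
Proof.
have -> : hAt = (fun v => (2 * lam)^-1 * dotv (v *m (lam *: A) + - y) (v *m (lam *: A) + - y))
                + cst (- ((2 * lam)^-1 * enorm y ^+ 2)).
  by apply/funext => u; rewrite /hAt /hlam /Atv !enorm_sqr scalemxAr.
apply: differentiableD (differentiable_cst _ _).
exact: differentiableM (differentiable_cst _ _) (differentiable_sqr_affine _ _ _).
Qed.

Lemma diff_hAt v h : 'd hAt v h = dotv (lam *: (v *m A) - y) (h *m A).
Proof.
rewrite -deriveE; last exact: hAt_differentiable.
by apply: (derive_quadratic_ray (c := lam / 2 * enorm (h *m A) ^+ 2)) => t; rewrite addrC hAt_addZ.
Qed.

Lemma hAt_convex : convex_fun hAt.
Proof.
move=> u v t t0 t1; set p := t *: u + (1 - t) *: v.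
have hu := hAt_addZ p (u - v) (1 - t).
have hv := hAt_addZ p (u - v) (- t).
rewrite (_ : p + _ = u) in hu; last by apply/rowP => i; rewrite !mxE; ring.
rewrite (_ : p + _ = v) in hv; last by apply/rowP => i; rewrite !mxE; ring.
rewrite hu hv sqrrN; set L := dotv _ _; set Q := _ * _ ^+ 2.
have Q0 : 0 <= Q by rewrite mulr_ge0 ?sqr_ge0 ?divr_ge0 ?ltW.
(* the first-order terms cancel, leaving [- t (1 - t) Q <= 0] *)
have tt : 0 <= t * (1 - t) by rewrite mulr_ge0 // subr_ge0.
by have := mulr_ge0 tt Q0; nra.
Qed.

Lemma hAt_lip_smooth : lip_smooth hAt (lam * opnorm (A^T *m A)).
Proof.
split=> [|u v]; first exact: hAt_differentiable.
have -> : hAt u = hAt (v + 1 *: (u - v)) by rewrite scale1r addrC subrK.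
rewrite diff_hAt hAt_addZ mul1r expr1n mul1r.
have -> : forall a b c : R, a + b + c - a - b = c by move=> *; ring.
have -> : lam * opnorm (A^T *m A) / 2 * enorm (u - v) ^+ 2 =
    lam / 2 * (opnorm (A^T *m A) * enorm (u - v) ^+ 2) by ring.
by apply: ler_wpM2l; [rewrite divr_ge0 ?ltW | exact: sqr_enorm_mulmx_le].
Qed.

End QuadraticPart.

Lemma enorm_row_mx0 (R : realType) k l (a : 'rV[R]_k) :
  enorm (row_mx a (0 : 'rV[R]_l)) = enorm a.
Proof.
rewrite /enorm /dotv big_split_ord /= [X in _ + X]big1 ?addr0.
  by under eq_bigr do rewrite row_mxEl.
by move=> j _; rewrite row_mxEr mxE mul0r.
Qed.

Lemma simplex_hoffman (R : realType) N n (B : 'M[R]_(N, n)) : exists K, 0 <= K /\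
  forall l l0, simplex l -> simplex l0 -> exists mu, [/\ simplex mu,
    mu *m B = l0 *m B & enorm (l - mu) <= K * enorm ((l - l0) *m B)].
Proof.
(* the column of ones encodes the constraint [\sum_i mu i = 1] *)
pose Bh := row_mx B (const_mx 1 : 'cV[R]_N).
have sum_mulmx (d : 'rV[R]_N) : (d *m (const_mx 1 : 'cV[R]_N)) 0 0 = \sum_i d 0 i.
  by rewrite mxE; apply: eq_bigr => i _; rewrite mxE mulr1.
have [K [K0 K_hoffman]] := conformal_hoffman Bh.
exists K; split=> // l l0 [l_ge0 l_sum] [l0_ge0 l0_sum].
have [e [e_betw eBh e_norm]] := K_hoffman (l0 - l).
move: eBh e_norm; rewrite /Bh !mul_mx_row => /eq_row_mx [eB e1] e_norm.
have d1 : (l0 - l) *m const_mx 1 = 0 :> 'rV[R]_1.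
  apply/rowP => i; rewrite (ord1 i) sum_mulmx mxE.
  by under eq_bigr do rewrite !mxE; rewrite sumrB l_sum l0_sum subrr.
exists (l + e); split.
- split=> [i|]; first rewrite mxE.
    have /between0P := e_betw i; rewrite !mxE.
    by have := l_ge0 i; have := l0_ge0 i; lra.
  under eq_bigr do rewrite mxE.
  by rewrite big_split /= -(sum_mulmx e) e1 d1 mxE l_sum addr0.
- by rewrite mulmxDl eB mulmxBl addrC subrK.
- rewrite opprD addNKr enormN (le_trans e_norm) //.
  by rewrite d1 enorm_row_mx0 -(opprB l l0) mulNmx enormN.
Qed.

Lemma hull_hoffman (R : realType) N m n (w : 'I_N -> 'rV[R]_m) (A : 'M[R]_(m, n)) :
  exists theta, 0 < theta /\ forall v s, in_hull w v -> in_hull w s ->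
    exists s', [/\ in_hull w s', s' *m A = s *m A &
                   enorm (v - s') <= theta * enorm ((v - s) *m A)].
Proof.
have [K [K0 K_hoffman]] := simplex_hoffman (Wmx w *m A).
have [c [c0 c_bound]] := enorm_mulmx_bound (Wmx w).
exists (c * K + 1); split=> [|_ _ [l [l_simplex ->]] [l0 [l0_simplex ->]]].
  by rewrite ltr_wpDl ?mulr_ge0.
have [mu [mu_simplex muB mu_norm]] := K_hoffman l l0 l_simplex l0_simplex.
exists (mu *m Wmx w); split; first by exists mu.
  by rewrite -!mulmxA.
rewrite -mulmxBl (le_trans (c_bound _)) // -mulmxBl -mulmxA.
apply: le_trans (ler_wpM2l c0 mu_norm) _.
by rewrite mulrA ler_wpM2r ?enorm_ge0 // lerDl.
Qed.

Section Distance.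
Variables (R : realType) (k : nat) (v : 'rV[R]_k) (S : set 'rV[R]_k).

Lemma distset_ge0 : S !=set0 -> 0 <= distset v S.
Proof.
move=> [s Ss]; apply: lb_le_inf; first by exists (enorm (v - s)), s.
by move=> _ [x _ <-]; apply: enorm_ge0.
Qed.

Lemma distset_le s : S s -> distset v S <= enorm (v - s).
Proof.
move=> Ss; apply: ge_inf; last by exists s.
by exists 0 => _ [x _ <-]; apply: enorm_ge0.
Qed.

End Distance.

Section Psi.
Variables (R : realType) (N m n : nat) (w : 'I_N -> 'rV[R]_m) (A : 'M[R]_(m, n)).
Hypothesis N_gt0 : (0 < N)%N.
Variables (lam : R) (y : 'rV[R]_n).
Hypothesis lam_gt0 : 0 < lam.
Local Notation Psi := (Psilam w A lam y).
Local Notation h := (hAt A lam y).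

Lemma Psi_hull v : in_hull w v -> Psi v = (h v)%:E.
Proof. by move=> v_hull; rewrite /Psilam fconj_hull // adde0. Qed.

Lemma Psi_out_hull v : ~ in_hull w v -> Psi v = +oo%E.
Proof.
move=> v_hull; apply/eqP; rewrite eq_le leey /= leNgt; apply: contra_notN v_hull.
move=> Psi_fin; apply: (fconj_dom_hull N_gt0); move: Psi_fin; rewrite /Psilam.
by case: (fconj (omega w) v) => // r _; rewrite ltey.
Qed.

Lemma Psi_argmin_exists : exists s, in_hull w s /\ argmin Psi s.
Proof.
have [s [s_hull s_min]] := hull_exists_min_sqr_affine w N_gt0 (- y) (lam *: A).
exists s; split=> // v; rewrite Psi_hull //.
case: (boolp.pselect (in_hull w v)) => [v_hull|/Psi_out_hull ->]; last exact: leey.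
rewrite Psi_hull // lee_fin /hAt /hlam /Atv !enorm_sqr !scalemxAr lerD2r.
by apply: ler_wpM2l; [rewrite invr_ge0 mulr_ge0 // ltW | exact: s_min].
Qed.

Lemma argmin_Psi_hull s : argmin Psi s -> in_hull w s.
Proof.
move=> s_min; have [p [p_hull _]] := Psi_argmin_exists.
apply: boolp.contrapT => /Psi_out_hull s_out.
by have := s_min p; rewrite s_out Psi_hull // leye_eq.
Qed.

(* first-order optimality at [s] makes the linear term of the expansion nonnegative *)
Lemma argmin_Psi_growth s v : argmin Psi s -> in_hull w v ->
  h s + lam / 2 * enorm ((v - s) *m A) ^+ 2 <= h v.
Proof.
move=> s_min v_hull; have s_hull := argmin_Psi_hull s_min.
set L := dotv (lam *: (s *m A) - y) ((v - s) *m A).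
set Q := lam / 2 * enorm ((v - s) *m A) ^+ 2.
have Q0 : 0 <= Q by rewrite mulr_ge0 ?sqr_ge0 ?divr_ge0 ?ltW.
have L_ge0 : 0 <= L.
  rewrite -oppr_le0; apply: (le0_of_le_scaled Q0) => t t0 t1.
  have st_hull : in_hull w (s + t *: (v - s)).
    have := in_hull_conv v_hull s_hull (ltW t0) t1.
    by rewrite (_ : _ + _ = s + t *: (v - s)) //; apply/rowP => i; rewrite !mxE; ring.
  have := s_min (s + t *: (v - s)); rewrite !Psi_hull // lee_fin hAt_addZ // -/L -/Q.
  by nra.
have -> : h v = h (s + 1 *: (v - s)) by rewrite scale1r addrC subrK.
rewrite hAt_addZ // -/L -/Q.
by rewrite mul1r expr1n mul1r lerD2r lerDl.
Qed.

Lemma Psi_quad_growth theta : 0 < theta ->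
  (forall v s, in_hull w v -> in_hull w s -> exists s', [/\ in_hull w s',
     s' *m A = s *m A & enorm (v - s') <= theta * enorm ((v - s) *m A)]) ->
  quad_growth Psi (lam / theta ^+ 2).
Proof.
move=> theta_gt0 theta_hoffman; have [p [_ p_min]] := Psi_argmin_exists.
split=> [|v s s_min]; first by exists p.
case: (boolp.pselect (in_hull w v)) => [v_hull|/Psi_out_hull ->]; last exact: leey.
have s_hull := argmin_Psi_hull s_min.
have [s' [s'_hull s'A vs']] := theta_hoffman v s v_hull s_hull.
(* [s'] is another minimizer: [Psi] only sees [s' *m A] on the hull *)
have s'_min : argmin Psi s'.
  move=> u; apply: le_trans (s_min u); rewrite !Psi_hull //.
  by rewrite /hAt /Atv s'A.
set D := distset v (argmin Psi).
have D0 : 0 <= D by apply: distset_ge0; exists s.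
have D_le : D <= theta * enorm ((v - s) *m A) := le_trans (distset_le v s'_min) vs'.
rewrite !Psi_hull // -EFinD lee_fin (le_trans _ (argmin_Psi_growth s_min v_hull)) //.
have -> : lam / theta ^+ 2 / 2 * D ^+ 2 = lam / 2 * (D ^+ 2 / theta ^+ 2).
  by field; apply: lt0r_neq0.
rewrite lerD2l; apply: ler_wpM2l; first by rewrite divr_ge0 ?ltW.
rewrite ler_pdivrMr ?exprn_gt0 // -exprMn.
by rewrite lerXn2r ?nnegrE ?mulr_ge0 ?enorm_ge0 ?(ltW theta_gt0) // mulrC.
Qed.

End Psi.

Theorem theorem7p6 (R : realType) (N m n : nat) (w : 'I_N -> 'rV[R]_m)
  (A : 'M[R]_(m, n)) (HN : (0 < N)%N) :
  (* (i) *)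
  ((forall z z' : 'rV[R]_m,
      `|omega w z - omega w z'| <=
        (\big[Num.max/0]_(i < N) enorm (w i)) * enorm (z - z')) /\
   ebounded_set (edom (fconj (omega w)))) /\
  (exists theta : R, 0 < theta /\
    (* (ii) *)
    (forall (lam : R) (y : 'rV[R]_n), 0 < lam ->
       convex_fun (fun v => hlam lam y (Atv A v)) /\
       lip_smooth (fun v => hlam lam y (Atv A v)) (lam * opnorm (A^T *m A)) /\
       (argmin (Psilam w A lam y) !=set0) /\
       quad_growth (Psilam w A lam y) (lam / theta ^+ 2)) /\
    (* (iii) *)
    (forall lam lammin : R, 0 < lammin -> lammin <= lam ->
       lammin / theta ^+ 2 <= lam / theta ^+ 2)).
Proof.
split.
  split=> [z z'|]; first exact: omega_lipschitz.
  by exists (Komega w) => v; apply: fconj_dom_bounded.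
have [theta [theta_gt0 theta_hoffman]] := hull_hoffman w A.
exists theta; split=> //; split=> [lam y lam_gt0|lam lammin _ le_lam].
  have [s [_ s_min]] := Psi_argmin_exists w A HN y lam_gt0.
  split; first exact: hAt_convex.
  split; first exact: hAt_lip_smooth.
  split; first by exists s.
  exact: Psi_quad_growth.
by rewrite ler_wpM2r // invr_ge0 exprn_ge0 // ltW.
Qed.
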